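(* Let $f:\mathbb{R}^n\to\mathbb{R}$ be of class $C^{2+}$ with $L_f$-Lipschitz continuous gradient, let $g:\mathbb{R}^n\to\mathbb{R}\cup\{+\infty\}$ be proper, lower semicontinuous and $\rho$-weakly convex, let $\varphi=f+g$ with $\operatorname{argmin}\varphi\neq\emptyset$, and suppose that for a given $x^0$ the sublevel set $\{x:\varphi(x)\le\varphi(x^0)\}$ is bounded. Then for $\gamma\in(0,\min\{1/L_f,1/\rho\})$, the sublevel set $\{x\in\mathbb{R}^n:\varphi_\gamma(x)\le\varphi_\gamma(x^0)\}$ is bounded.
   Context: $C^{2+}$: twice continuously differentiable with locally Lipschitz Hessian. $g$ is $\rho$-weakly convex if $g+\frac\rho2\|\cdot\|^2$ is convex. Forward-backward envelope: $\varphi_\gamma(x)=\inf_u\{f(x)+\langle\nabla f(x),u-x\rangle+g(u)+\frac1{2\gamma}\|u-x\|^2\}$. *)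

From HB Require Import structures.
From mathcomp Require Import all_boot all_order all_algebra.
From mathcomp Require Import all_classical all_reals all_analysis.
Set Implicit Arguments. Unset Strict Implicit. Unset Printing Implicit Defensive.
Import Order.TTheory GRing.Theory Num.Theory.
Import numFieldNormedType.Exports.
Local Open Scope ring_scope.

Definition dotv {R : realType} {n : nat} (u v : 'rV[R]_n) : R :=
  \sum_(i < n) u ord0 i * v ord0 i.
Definition enorm {R : realType} {n : nat} (u : 'rV[R]_n) : R :=
  Num.sqrt (dotv u u).

Definition fbe {R : realType} {n : nat} (f : 'rV[R]_n -> R)
  (gradf : 'rV[R]_n -> 'rV[R]_n) (g : 'rV[R]_n -> \bar R) (gamma : R)
  (x : 'rV[R]_n) : \bar R :=
  ereal_inf (range (fun u : 'rV[R]_n =>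
    ((f x + dotv (gradf x) (u - x))%:E + g u
      + ((enorm (u - x)) ^+ 2 / (2 * gamma))%:E)%E)).

Definition econvex {R : realType} {n : nat} (h : 'rV[R]_n -> \bar R) : Prop :=
  forall (x y : 'rV[R]_n) (t : R), 0 < t < 1 ->
    (h (t *: x + (1 - t) *: y)%R <= t%:E * h x + (1 - t)%:E * h y)%E.

Definition weakly_convex {R : realType} {n : nat} (rho : R)
  (g : 'rV[R]_n -> \bar R) : Prop :=
  econvex (fun x => (g x + (rho / 2 * enorm x ^+ 2)%:E)%E).

Definition proper_fun {R : realType} {n : nat} (g : 'rV[R]_n -> \bar R) : Prop :=
  (forall x, (-oo < g x)%E) /\ exists x, (g x < +oo)%E.

Definition bounded_euclid {R : realType} {n : nat} (A : set 'rV[R]_n) : Prop :=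
  exists M : R, forall x, A x -> enorm x <= M.

(* By the descent lemma, f u <= f x + <gradf x, u - x> + Lf/2 |u - x|^2, so the
   model minimised in phi_gamma(x) dominates phi(u) + c |u - x|^2, where
   c = (1 - gamma Lf) / (2 gamma) > 0.  If phi_gamma(x) <= phi_gamma(x0) <= phi(x0),
   there are therefore points u with phi(u) arbitrarily close to phi(x0) from above
   and |u - x|^2 <= (phi(x0) - inf phi + 1) / c; compactness and lower
   semicontinuity of phi produce one with phi(u) <= phi(x0).  So the FBE sublevel
   set lies within bounded distance of the bounded sublevel set of phi. *)

From HB Require Import structures.
From mathcomp Require Import all_boot all_order all_algebra.
From mathcomp Require Import all_classical all_reals all_analysis.
From mathcomp Require Import ring lra.
Import Order.TTheory GRing.Theory Num.Theory.
Import numFieldNormedType.Exports.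
Local Open Scope classical_set_scope.
Local Open Scope ring_scope.

Section euclidean.
Context {R : realType} {n : nat}.
Implicit Types (u v w : 'rV[R]_n) (t : R).

Lemma dotvC u v : dotv u v = dotv v u.
Proof. by apply: eq_bigr => i _; rewrite mulrC. Qed.

Lemma dotvDl u v w : dotv (u + v) w = dotv u w + dotv v w.
Proof. by rewrite /dotv -big_split; apply: eq_bigr => i _; rewrite !mxE mulrDl. Qed.

Lemma dotvBl u v w : dotv (u - v) w = dotv u w - dotv v w.
Proof. by rewrite /dotv -sumrB; apply: eq_bigr => i _; rewrite !mxE mulrBl. Qed.

Lemma dotvZl t u v : dotv (t *: u) v = t * dotv u v.
Proof. by rewrite /dotv mulr_sumr; apply: eq_bigr => i _; rewrite !mxE mulrA. Qed.

Lemma dotvDr u v w : dotv u (v + w) = dotv u v + dotv u w.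
Proof. by rewrite dotvC dotvDl !(dotvC u). Qed.

Lemma dotvBr u v w : dotv u (v - w) = dotv u v - dotv u w.
Proof. by rewrite dotvC dotvBl !(dotvC u). Qed.

Lemma dotvZr t u v : dotv u (t *: v) = t * dotv u v.
Proof. by rewrite dotvC dotvZl dotvC. Qed.

Lemma dotv0r u : dotv u 0 = 0.
Proof. by rewrite /dotv big1 // => i _; rewrite mxE mulr0. Qed.

Lemma dotv_ge0 u : 0 <= dotv u u.
Proof. by apply: sumr_ge0 => i _; rewrite -expr2 sqr_ge0. Qed.

Lemma dotv_eq0 u v : dotv u u = 0 -> dotv u v = 0.
Proof.
move=> /psumr_eq0P u0; rewrite /dotv big1 // => i _.
have /eqP : u ord0 i * u ord0 i = 0 by apply: u0 => // j _; rewrite -expr2 sqr_ge0.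
by rewrite mulf_eq0 orbb => /eqP ->; rewrite mul0r.
Qed.

Lemma enorm_ge0 u : 0 <= enorm u.
Proof. exact: sqrtr_ge0. Qed.

Lemma enorm_sqr u : enorm u ^+ 2 = dotv u u.
Proof. by rewrite sqr_sqrtr // dotv_ge0. Qed.

Lemma enorm0 : enorm (0 : 'rV[R]_n) = 0.
Proof. by rewrite /enorm dotv0r sqrtr0. Qed.

Lemma enormZ t u : enorm (t *: u) = `|t| * enorm u.
Proof.
by rewrite /enorm dotvZl dotvZr mulrA -expr2 sqrtrM ?sqr_ge0 // sqrtr_sqr.
Qed.

Lemma cauchy_schwarz u v : dotv u v <= enorm u * enorm v.
Proof.
have [uv0|uv_neq0] := eqVneq (enorm u * enorm v) 0.
  move: uv0 => /eqP; rewrite mulf_eq0 => /orP[] /eqP e0.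
    by rewrite dotv_eq0 ?e0 ?mul0r // -enorm_sqr e0 expr0n.
  by rewrite dotvC dotv_eq0 ?e0 ?mulr0 // -enorm_sqr e0 expr0n.
set a := enorm u; set b := enorm v.
have ab_gt0 : 0 < a * b by rewrite lt0r uv_neq0 mulr_ge0 ?enorm_ge0.
have : 0 <= dotv (b *: u - a *: v) (b *: u - a *: v) := dotv_ge0 _.
rewrite !(dotvBl, dotvBr, dotvZl, dotvZr) -!enorm_sqr (dotvC v u) -/a -/b.
have -> : b * (b * a ^+ 2 - a * dotv u v) - a * (b * dotv u v - a * b ^+ 2) =
          2 * (a * b) * (a * b - dotv u v) by ring.
by rewrite pmulr_rge0 ?subr_ge0 // mulr_gt0.
Qed.

Lemma enormD u v : enorm (u + v) <= enorm u + enorm v.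
Proof.
rewrite -ler_sqr ?nnegrE ?addr_ge0 ?enorm_ge0 // enorm_sqr.
rewrite !(dotvDl, dotvDr) (dotvC v u) -!enorm_sqr.
by have := cauchy_schwarz u v; nra.
Qed.

Lemma enorm_coord_le u i : `|u ord0 i| <= enorm u.
Proof.
rewrite -sqrtr_sqr; apply: ler_wsqrtr.
rewrite /dotv (bigD1 i) //= -expr2 lerDl.
by apply: sumr_ge0 => j _; rewrite -expr2 sqr_ge0.
Qed.

Lemma enorm_le_box u r :
  (forall i, `|u ord0 i| <= r) -> enorm u <= Num.sqrt (r ^+ 2 *+ n).
Proof.
move=> ur; apply: ler_wsqrtr; rewrite -[n in _ *+ n]card_ord -sumr_const.
apply: ler_sum => i _; rewrite -expr2 -real_normK ?num_real //.
by rewrite lerXn2r ?nnegrE ?(le_trans _ (ur i)).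
Qed.

End euclidean.

Lemma is_derive_line {R : numFieldType} {V W : normedModType R} (f : V -> W)
    (x d : V) (t : R) :
  differentiable f (x + t *: d) ->
  is_derive t 1 (fun s => f (x + s *: d)) ('d f (x + t *: d) d).
Proof.
move=> df.
have dl : is_diff t (fun s : R => x + s *: d) (fun s => s *: d).
  by have := is_diffD (is_diff_cst x t) (is_diff_scalel t d); rewrite add0r.
have dc : differentiable (f \o (fun s : R => x + s *: d)) t.
  exact: differentiable_comp.
apply: DeriveDef; first exact: diff_derivable.
by rewrite deriveE // diff_comp // diff_val /= scale1r.
Qed.

Section descent_lemma.
Context {R : realType} {n : nat} {f : 'rV[R]_n -> R}.
Context {gradf : 'rV[R]_n -> 'rV[R]_n} {Lf : R}.
Hypothesis gradfP :
  forall x, differentiable f x /\ forall v, 'd f x v = dotv (gradf x) v.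
Hypothesis gradf_lipschitz :
  forall x y, enorm (gradf x - gradf y) <= Lf * enorm (x - y).

Lemma descent_lemma x u :
  f u <= f x + dotv (gradf x) (u - x) + Lf / 2 * enorm (u - x) ^+ 2.
Proof.
set d := u - x; set A := dotv (gradf x) d; set B := Lf / 2 * enorm d ^+ 2.
pose k t := f (x + t *: d) - (t * A + t ^+ 2 * B).
have dk (t : R) :
    is_derive t (1 : R) k (dotv (gradf (x + t *: d)) d - (A + 2 * t * B)).
  have [dfx dfE] := gradfP (x + t *: d).
  rewrite -dfE; apply: is_deriveB; first exact: is_derive_line.
  rewrite [X in is_derive _ _ X _](_ : _ = id * cst A + id ^+ 2 * cst B) //.
  apply: is_derive_eq.
  rewrite !scaler0 !add0r /cst /= expr1 -[A%:A]/(A * 1) -[B *: _]/(B * _).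
  by rewrite -[(2 * t)%:A]/(2 * t * 1); ring.
have k_nonincr : k 1 <= k 0.
  apply: (@ler0_derive1_le_cc R k 0 1); last 3 first.
  - by rewrite in_itv /= lexx ler01.
  - by rewrite in_itv /= lexx ler01.
  - exact: ler01.
  - by move=> t _; case: (dk t).
  - move=> t; rewrite in_itv /= => /andP[t_gt0 _].
    case: (dk t) => _; rewrite derive1E => ->; rewrite subr_le0.
    have lip := gradf_lipschitz (x + t *: d) x.
    rewrite [x + _ - x]addrC addKr enormZ gtr0_norm // in lip.
    have := cauchy_schwarz (gradf (x + t *: d) - gradf x) d.
    rewrite dotvBl -/A; have := ler_wpM2r (enorm_ge0 d) lip; rewrite /B; nra.
  - by apply: derivable_within_continuous => t _; case: (dk t).
by move: k_nonincr; rewrite /k scale1r scale0r addr0 /d (addrC x) subrK; lra.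
Qed.

End descent_lemma.

Lemma lower_semicontinuousDl {T : topologicalType} {R : realType}
    (f : T -> R) (g : T -> \bar R) :
  continuous f -> lower_semicontinuous g ->
  lower_semicontinuous (fun x => ((f x)%:E + g x)%E).
Proof.
move=> fc gl x a afgx.
have [b [ab bgx]] : exists b, a - f x < b /\ (b%:E < g x)%E.
  move: afgx; case: (g x) => [r| |] //= afgx.
  - exists ((a - f x + r) / 2); rewrite -EFinD lte_fin in afgx.
    by rewrite lte_fin; split; lra.
  - by exists (a - f x + 1); split; [lra | exact: ltry].
have [V Vx bgV] := gl x b bgx.
have e_gt0 : 0 < b - (a - f x) by rewrite subr_gt0.
have fx_near : nbhs x [set y | `|f x - f y| < b - (a - f x)].
  by move: (fc x) => /cvgr_dist_lt; apply.
exists (V `&` [set y | `|f x - f y| < b - (a - f x)]); first exact: filterI.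
move=> y [/bgV bgy]; rewrite /= ltr_norml => /andP[_ fy].
apply: (@lt_le_trans _ _ ((f y)%:E + b%:E)%E); last by rewrite leeD2l // ltW.
by rewrite -EFinD lte_fin; lra.
Qed.

Lemma compact_lsc_le {T : topologicalType} {R : realType} {h : T -> \bar R}
    {K : set T} {a : R} :
  compact K -> lower_semicontinuous h ->
  (forall e, 0 < e -> exists2 u, K u & (h u < (a + e)%:E)%E) ->
  exists2 u, K u & (h u <= a%:E)%E.
Proof.
move=> cK hl approx.
pose E e := K `&` [set u | (h u < (a + e)%:E)%E].
pose F := filter_from [set e : R | 0 < e] E.
have F_proper : ProperFilter F.
  apply: filter_from_proper; last by move=> e /approx[u Ku hu]; exists u.
  apply: filter_from_filter; first by exists 1; rewrite /= ltr01.
  move=> e1 e2 e1_gt0 e2_gt0; exists (Order.min e1 e2).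
    by rewrite /= lt_min e1_gt0.
  by move=> u [Ku hu]; split; split => //; apply: (lt_le_trans hu);
    rewrite lee_fin lerD2l ge_min lexx ?orbT.
have FK : F K by exists 1; [exact: ltr01 | move=> u []].
have [u [Ku u_cluster]] := cK F F_proper FK.
exists u => //; rewrite leNgt; apply/negP => ahu.
have [b [ab bhu]] : exists b, a < b /\ (b%:E < h u)%E.
  move: ahu; case: (h u) => [r| |] //= ahu.
  - by exists ((a + r) / 2); move: ahu; rewrite !lte_fin => ahu; split; lra.
  - by exists (a + 1); split; [lra | exact: ltry].
have [V Vu bhV] := hl u b bhu.
have Fba : F (E (b - a)) by exists (b - a); rewrite /= ?subr_gt0.
have [y [[_ hy] Vy]] := u_cluster _ _ Fba Vu.
by have := lt_trans (bhV y Vy) hy; rewrite addrCA subrr addr0 ltxx.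
Qed.

Lemma box_compact {R : realType} {n : nat} (x : 'rV[R]_n) (r : R) :
  compact [set u : 'rV[R]_n | forall i, `|u ord0 i - x ord0 i| <= r].
Proof.
have -> : [set u : 'rV[R]_n | forall i, `|u ord0 i - x ord0 i| <= r] =
    [set u | forall i, `[x ord0 i - r, x ord0 i + r]%classic (u ord0 i)].
  apply/seteqP; split => u /= ur i; have := ur i;
    by rewrite ler_norml in_itv /= => /andP[? ?]; apply/andP; split; lra.
apply: (@rV_compact _ _ (fun i => `[x ord0 i - r, x ord0 i + r]%classic)).
by move=> i; exact: segment_compact.
Qed.

Definition fb_model {R : realType} {n : nat} (f : 'rV[R]_n -> R)
    (gradf : 'rV[R]_n -> 'rV[R]_n) (g : 'rV[R]_n -> \bar R) (gamma : R)
    (x u : 'rV[R]_n) : \bar R :=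
  ((f x + dotv (gradf x) (u - x))%:E + g u
    + (enorm (u - x) ^+ 2 / (2 * gamma))%:E)%E.

Lemma fbe_le_objective {R : realType} {n : nat} {f : 'rV[R]_n -> R}
    {gradf : 'rV[R]_n -> 'rV[R]_n} {g : 'rV[R]_n -> \bar R} {gamma : R} x :
  (fbe f gradf g gamma x <= (f x)%:E + g x)%E.
Proof.
apply: ereal_inf_lbound; exists x => //.
by rewrite subrr dotv0r enorm0 expr0n /= mul0r !addr0.
Qed.

Section forward_backward_envelope.
Context {R : realType} {n : nat} {f : 'rV[R]_n -> R}.
Context {gradf : 'rV[R]_n -> 'rV[R]_n} {g : 'rV[R]_n -> \bar R} {Lf gamma : R}.
Hypothesis gradfP :
  forall x, differentiable f x /\ forall v, 'd f x v = dotv (gradf x) v.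
Hypothesis gradf_lipschitz :
  forall x y, enorm (gradf x - gradf y) <= Lf * enorm (x - y).
Hypothesis gamma_gt0 : 0 < gamma.
Hypothesis gammaLf_lt1 : gamma * Lf < 1.

Local Notation phi x := ((f x)%:E + g x)%E.
Local Notation c := ((1 - gamma * Lf) / (2 * gamma)).

Lemma fb_model_ge x u :
  ((f u + c * enorm (u - x) ^+ 2)%:E + g u <= fb_model f gradf g gamma x u)%E.
Proof.
rewrite /fb_model addeAC -EFinD leeD2r // lee_fin.
have := descent_lemma gradfP gradf_lipschitz x u.
have -> : c * enorm (u - x) ^+ 2 =
    enorm (u - x) ^+ 2 / (2 * gamma) - Lf / 2 * enorm (u - x) ^+ 2.
  by field; rewrite gt_eqF.
lra.
Qed.

Hypothesis g_lsc : lower_semicontinuous g.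

Lemma fbe_sublevel_near_sublevel (m p : R) : (forall y, (m%:E <= phi y)%E) ->
  exists r, forall x, (fbe f gradf g gamma x <= p%:E)%E ->
    exists2 u, (phi u <= p%:E)%E & enorm (x - u) <= r.
Proof.
move=> phi_ge_m.
have c_gt0 : 0 < c by rewrite divr_gt0 ?subr_gt0 ?mulr_gt0.
pose r := Num.sqrt ((p - m + 1) / c).
exists (Num.sqrt (r ^+ 2 *+ n)) => x fbe_le_p.
have approx (e : R) : 0 < e ->
    exists2 u : 'rV[R]_n, (forall i, `|u ord0 i - x ord0 i| <= r)
      & (phi u < (p + e)%:E)%E.
  (* capping e at 1 keeps the radius r independent of e *)
  move=> e_gt0; pose e' := Order.min e 1.
  have /ereal_inf_lt[_ [u _ <-]] : (fbe f gradf g gamma x < (p + e')%:E)%E.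
    by apply: (le_lt_trans fbe_le_p); rewrite lte_fin ltrDl lt_min e_gt0 ltr01.
  move=> /(le_lt_trans (fb_model_ge x u)) model_u.
  have gu_fin : g u \is a fin_num.
    rewrite fin_numE; apply/andP; split; apply/eqP => gu.
      by have := phi_ge_m u; rewrite gu addeNy leeNy_eq.
    by move: model_u; rewrite gu addey.
  move: model_u (phi_ge_m u); rewrite -(fineK gu_fin) -!EFinD !lee_fin !lte_fin.
  move=> model_u phi_u.
  have e'_le : e' <= e /\ e' <= 1 by rewrite !ge_min !lexx ?orbT.
  have cD_ge0 : 0 <= c * enorm (u - x) ^+ 2 by rewrite mulr_ge0 ?sqr_ge0 ?ltW.
  exists u; last by rewrite -(fineK gu_fin) -EFinD lte_fin; lra.
  move=> i; have := enorm_coord_le (u - x) i; rewrite !mxE => /le_trans; apply.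
  by apply: ler_wsqrtr; rewrite -enorm_sqr ler_pdivlMr //; lra.
have phi_lsc : lower_semicontinuous (fun y => phi y).
  apply: lower_semicontinuousDl g_lsc => y.
  exact: differentiable_continuous (gradfP y).1.
have [u u_box phi_u] := compact_lsc_le (box_compact x r) phi_lsc approx.
by exists u => //; apply: enorm_le_box => i; rewrite !mxE distrC.
Qed.

End forward_backward_envelope.

Theorem lemma4p4 (R : realType) (n : nat)
  (f : 'rV[R]_n -> R) (gradf : 'rV[R]_n -> 'rV[R]_n)
  (g : 'rV[R]_n -> \bar R) (Lf rho gamma : R) (x0 : 'rV[R]_n) :
  (* f is differentiable with gradient gradf *)
  (forall x, differentiable f x /\ forall v, 'd f x v = dotv (gradf x) v) ->
  (* f is C^{2+}: gradf is differentiable, with locally Lipschitz Hessian *)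
  (forall x, differentiable gradf x) ->
  (forall x, exists2 r : R, 0 < r & exists K : R, forall y z v,
      enorm (y - x) < r -> enorm (z - x) < r ->
      enorm ('d gradf y v - 'd gradf z v) <= K * enorm (y - z) * enorm v) ->
  (* gradf is Lf-Lipschitz *)
  0 <= Lf ->
  (forall x y, enorm (gradf x - gradf y) <= Lf * enorm (x - y)) ->
  (* g proper, lsc, rho-weakly convex *)
  proper_fun g -> lower_semicontinuous g ->
  0 <= rho -> weakly_convex rho g ->
  (* argmin (f + g) nonempty *)
  (exists xs, forall y, ((f xs)%:E + g xs <= (f y)%:E + g y)%E) ->
  (* bounded sublevel set of phi at x0 *)
  bounded_euclid [set x | ((f x)%:E + g x <= (f x0)%:E + g x0)%E] ->
  (* gamma in (0, min{1/Lf, 1/rho}) *)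
  0 < gamma -> gamma * Lf < 1 -> gamma * rho < 1 ->
  bounded_euclid [set x | (fbe f gradf g gamma x <= fbe f gradf g gamma x0)%E].
Proof.
move=> gradfP _ _ _ gradf_lip [g_gtNy [y0 gy0_ltey]] g_lsc _ _ [xs xs_min].
move=> [M phi_bdd]
  gamma_gt0 gammaLf_lt1 _.
have [gx0_ey|gx0_ney] := eqVneq (g x0) +oo%E.
  by exists M => x _; apply: phi_bdd; rewrite /= gx0_ey addey ?leey.
have fin_phi y : g y != +oo%E -> ((f y)%:E + g y = (f y + fine (g y))%:E)%E.
  by move=> gy_ney; rewrite EFinD fineK // fin_numE -ltNye g_gtNy.
have phi_ge y : ((f xs + fine (g xs))%:E <= (f y)%:E + g y)%E.
  rewrite -fin_phi //; apply/negP => /eqP gxs_ey.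
  move: (xs_min y0); rewrite gxs_ey addey // leye_eq => /eqP.
  by move: gy0_ltey; case: (g y0).
have [r near_phi] := fbe_sublevel_near_sublevel gradfP gradf_lip gamma_gt0
  gammaLf_lt1 g_lsc _ (f x0 + fine (g x0)) phi_ge.
rewrite -fin_phi // in near_phi.
exists (M + r) => x /= fbe_x.
have [u /phi_bdd u_le xu_le] :=
  near_phi x (le_trans fbe_x (fbe_le_objective x0)).
by have := enormD u (x - u); rewrite addrC subrK; lra.
Qed.
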